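(* Let $G=\bigsqcup_{i=1}^t K_{n_i}$ be a disjoint union of complete graphs with $t\ge2$ and all $n_i\ge1$. Then $\mathcal{K}^{\mathsf{TJ}}(G)=\{k:k\ge2\}$.
   Context: All graphs are finite, simple, undirected. A $k$-clique of a graph $H$ is a set of $k$ pairwise adjacent vertices. For a graph $H$ and integer $k\ge1$, the Token Jumping graph $\mathsf{TJ}_k(H)$ has as vertices the $k$-cliques of $H$, and two $k$-cliques $A,B$ are adjacent iff $|A\cap B|=k-1$. For a graph $G$, $\mathcal{K}^{\mathsf{TJ}}(G)=\{k\ge1:\ \exists H,\ \mathsf{TJ}_k(H)\cong G\}$. *)

From mathcomp Require Import all_boot.
Set Implicit Arguments. Unset Strict Implicit. Unset Printing Implicit Defensive.

Record sgraph := SGraph {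
  svert : finType;
  sadj : rel svert;
  sadj_sym : symmetric sadj;
  sadj_irr : irreflexive sadj }.

Definition is_clique (H : sgraph) (A : {set svert H}) : bool :=
  [forall x in A, forall y in A, (x != y) ==> @sadj H x y].

Definition is_kclique (H : sgraph) (k : nat) (A : {set svert H}) : bool :=
  is_clique A && (#|A| == k).

Definition TJvert (H : sgraph) (k : nat) := {A : {set svert H} | is_kclique k A}.

Definition TJadj (H : sgraph) (k : nat) : rel (TJvert H k) :=
  fun A B => #|val A :&: val B| == k.-1.

Definition graph_iso (T1 T2 : finType) (e1 : rel T1) (e2 : rel T2) : Prop :=
  exists f : T1 -> T2, bijective f /\ forall x y, e1 x y = e2 (f x) (f y).

Definition KTJ (G : sgraph) (k : nat) : Prop :=
  1 <= k /\ exists H : sgraph, graph_iso (@TJadj H k) (@sadj G).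

(* Disjoint union of complete graphs K_{n_0}, ..., K_{n_{t-1}}. *)
Definition ucliq_adj (t : nat) (n : 'I_t -> nat) : rel {i : 'I_t & 'I_(n i)} :=
  fun x y => (tag x == tag y) && (x != y).

Lemma ucliq_sym t (n : 'I_t -> nat) : symmetric (@ucliq_adj t n).
Proof. by move=> x y; rewrite /ucliq_adj (eq_sym (tag x)) (eq_sym x). Qed.

Lemma ucliq_irr t (n : 'I_t -> nat) : irreflexive (@ucliq_adj t n).
Proof. by move=> x; rewrite /ucliq_adj /= !eqxx. Qed.

Definition union_complete (t : nat) (n : 'I_t -> nat) : sgraph :=
  SGraph (@ucliq_sym t n) (@ucliq_irr t n).

From mathcomp Require Import all_boot.
Set Implicit Arguments. Unset Strict Implicit.

(* k = 1 is excluded because distinct singletons are always adjacent in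
   TJ_1(H), so TJ_1(H) is complete, whereas G has two nonadjacent vertices.
   For k >= 2 take H with a (k-1)-clique C_i for each component i of G and,
   for each vertex x of the i-th component, a new vertex joined to all of
   C_i. Its k-cliques are exactly the sets x + C_i, which meet in k-1
   vertices iff they come from the same component. *)

Lemma TJ1_adj (H : sgraph) (A B : TJvert H 1) : TJadj A B = (A != B).
Proof.
rewrite /TJadj -val_eqE.
case/andP: (valP A) (valP B) => _ /cards1P [a ->] /andP [_ /cards1P [b ->]].
case: (eqVneq a b) => [->|neq_ab]; first by rewrite setIid cards1 eqxx.
rewrite (inj_eq set1_inj) neq_ab.
suff -> : [set a] :&: [set b] = set0 by rewrite cards0.
by apply/setP=> z; rewrite !inE; apply: contra_neqF neq_ab => /andP [/eqP <- /eqP].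
Qed.

Lemma KTJ1_complete (G : sgraph) (x y : svert G) :
  KTJ G 1 -> x != y -> sadj x y.
Proof.
move=> [_ [H [f [[g fK gK] f_adj]]]] neq_xy.
by rewrite -(gK x) -(gK y) -f_adj TJ1_adj (can_eq gK).
Qed.

Section ConeConstruction.

Variables (I V : finType) (lab : V -> I) (k : nat).
Hypothesis k_gt1 : 1 < k.

Let pred_k_lt : k.-1 < k.
Proof. by rewrite ltn_predL ltnW. Qed.

Definition cvert := (V + I * 'I_k.-1)%type.

Definition clab (u : cvert) : I := match u with inl x => lab x | inr p => p.1 end.

Definition cadj (u v : cvert) : bool :=
  [&& clab u == clab v, u != v & ~~ (is_inl u && is_inl v)].

Lemma cadj_sym : symmetric cadj.
Proof.
by move=> u v; rewrite /cadj [clab u == _]eq_sym [u == _]eq_sym [is_inl u && _]andbC.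
Qed.

Lemma cadj_irr : irreflexive cadj.
Proof. by move=> u; rewrite /cadj !eqxx. Qed.

Definition cone_graph := SGraph cadj_sym cadj_irr.

Definition core (i : I) : {set cvert} := [set inr (i, c) | c : 'I_k.-1].

Definition cone (x : V) : {set cvert} := inl x |: core (lab x).

Lemma mem_core i u : (u \in core i) = ~~ is_inl u && (clab u == i).
Proof.
apply/imsetP/andP => [[c _ ->]|]; first by rewrite eqxx.
case: u => [z|[j c]] /= [// _ /eqP ->]; by exists c.
Qed.

Lemma card_core i : #|core i| = k.-1.
Proof. by rewrite card_imset ?card_ord // => c d []. Qed.

Lemma mem_cone x u :
  (u \in cone x) = (clab u == lab x) && (is_inl u ==> (u == inl x)).
Proof.
rewrite in_setU1 mem_core; case: u => [y|p] /=; last by rewrite andbT.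
by rewrite orbF andb_idl // => /eqP [->].
Qed.

Lemma card_cone x : #|cone x| = k.
Proof. by rewrite cardsU1 mem_core card_core add1n prednK // ltnW. Qed.

Lemma cone_kclique x : is_kclique (H := cone_graph) k (cone x).
Proof.
rewrite /is_kclique card_cone eqxx andbT.
apply/forallP=> u; apply/implyP; rewrite mem_cone => /andP [/eqP lab_u inl_u].
apply/forallP=> v; apply/implyP; rewrite mem_cone => /andP [/eqP lab_v inl_v].
apply/implyP=> neq_uv; rewrite /= /cadj lab_u lab_v eqxx neq_uv /=.
apply: contra neq_uv => /andP [/(implyP inl_u) /eqP -> /(implyP inl_v) /eqP ->].
exact: eqxx.
Qed.

Lemma coreI_cone x y : lab x = lab y -> x != y -> cone x :&: cone y = core (lab x).
Proof.
move=> eq_lab neq_xy; apply/setP=> u; rewrite inE !mem_cone mem_core -eq_lab andbACA andbb.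
case: u => [z|p] /=; last by rewrite andbT.
by apply: contra_neqF neq_xy => /and3P [_ /eqP [->] /eqP []].
Qed.

Lemma coneI_cone0 x y : lab x != lab y -> cone x :&: cone y = set0.
Proof.
move=> neq_lab; apply/setP=> u; rewrite inE !mem_cone in_set0.
by apply: contra_neqF neq_lab => /andP [/andP [/eqP <- _] /andP [/eqP <- _]].
Qed.

Definition cone_vert (x : V) : TJvert cone_graph k := exist _ (cone x) (cone_kclique x).

Lemma cone_vert_adj x y :
  TJadj (cone_vert x) (cone_vert y) = (lab x == lab y) && (x != y).
Proof.
rewrite /TJadj /=.
case: (eqVneq x y) => [<-|neq_xy]; first by rewrite setIid card_cone andbF gtn_eqF.
case: (eqVneq (lab x) (lab y)) => [eq_lab|neq_lab].
  by rewrite coreI_cone // card_core eqxx.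
by rewrite coneI_cone0 // cards0 /= eq_sym eqn0Ngt ltn_predRL k_gt1.
Qed.

Lemma cone_vert_inj : injective cone_vert.
Proof.
move=> x y /(f_equal val) /= eq_cone.
have : inl x \in cone y by rewrite -eq_cone setU11.
by rewrite mem_cone => /andP [_ /eqP []].
Qed.

Section Cliques.

Variable A : {set cvert}.
Hypothesis A_kclique : is_kclique (H := cone_graph) k A.

Lemma kclique_cadj u v : u \in A -> v \in A -> u != v -> cadj u v.
Proof.
case/andP: A_kclique => /forallP /(_ u) /implyP A_cl _ Au Av.
by apply/implyP; move/forallP: (A_cl Au) => /(_ v) /implyP; apply.
Qed.

(* A k-clique cannot lie inside a core, which has only k - 1 vertices. *)
Lemma kclique_has_apex : exists x, inl x \in A.
Proof.
case/andP: A_kclique => _ /eqP card_A.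
have [u Au] : exists u, u \in A by apply/card_gt0P; rewrite card_A ltnW.
apply/existsP; apply: contraT => /existsPn no_apex.
suff : A \subset core (clab u).
  by move/subset_leq_card; rewrite card_core card_A leqNgt pred_k_lt.
apply/subsetP=> v Av; rewrite mem_core.
have not_apex w : w \in A -> ~~ is_inl w by case: w => // z; rewrite (negbTE (no_apex z)).
rewrite not_apex //=; case: (eqVneq v u) => [-> //|neq_vu].
by case/and3P: (kclique_cadj Av Au neq_vu).
Qed.

Lemma kclique_cone : exists x, cone_vert x = exist _ A A_kclique.
Proof.
have [x Ax] := kclique_has_apex.
exists x; apply: val_inj => /=; apply/esym/eqP.
rewrite eqEcard card_cone; case/andP: A_kclique => _ /eqP ->; rewrite leqnn andbT.
apply/subsetP=> u Au; rewrite mem_cone.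
case: (eqVneq u (inl x)) => [-> /=|neq_ux]; first by rewrite eqxx.
case/and3P: (kclique_cadj Au Ax neq_ux) => /eqP -> _ /=.
by rewrite eqxx andbT => /negbTE ->.
Qed.

End Cliques.

Lemma cone_vert_bij : bijective cone_vert.
Proof.
apply: (inj_card_bij cone_vert_inj).
rewrite -(card_codom cone_vert_inj); apply/subset_leq_card/subsetP => [[A hA] _].
by have [x <-] := kclique_cone hA; exact: codom_f.
Qed.

Lemma cone_graph_TJ :
  graph_iso (@TJadj cone_graph k) (fun x y : V => (lab x == lab y) && (x != y)).
Proof.
have [g fK gK] := cone_vert_bij.
exists g; split; first exact: (Bijective gK fK).
by move=> A B; rewrite -{1}(gK A) -{1}(gK B) cone_vert_adj.
Qed.

End ConeConstruction.

Theorem proposition4p9 (t : nat) (n : 'I_t -> nat) :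
  2 <= t -> (forall i, 1 <= n i) ->
  forall k : nat, KTJ (union_complete n) k <-> 2 <= k.
Proof.
move=> t_gt1 n_gt0 k; split; last first.
  move=> k_gt1; split; first exact: ltnW.
  by exists (cone_graph (@tag _ (fun i => 'I_(n i))) k); exact: cone_graph_TJ.
case=> k_gt0 KTJ_k; case: k k_gt0 KTJ_k => [//|[|//]] _ KTJ_1.
pose i0 : 'I_t := Ordinal (ltnW t_gt1).
pose i1 : 'I_t := Ordinal t_gt1.
pose x : svert (union_complete n) := Tagged (fun i => 'I_(n i)) (Ordinal (n_gt0 i0)).
pose y : svert (union_complete n) := Tagged (fun i => 'I_(n i)) (Ordinal (n_gt0 i1)).
have neq_xy : x != y by apply: contraTneq isT => /(f_equal (@tag _ _)).
by have := KTJ1_complete (conj isT KTJ_1) neq_xy; rewrite /= /ucliq_adj.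
Qed.
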